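(* Let $\mathbf{A}$ be an algebra with an $m$-ary, $p$-pointed, $k$-cube term, with at least one constant symbol appearing in the cube identities (so $p\geq 1$). If $\mathbf{A}^{p+k-1}$ is finitely generated, then all finite powers of $\mathbf{A}$ are finitely generated and $d_{\mathbf{A}}(n)$ is bounded above by a polynomial of degree at most $\log_w(m)$, where $w = 2k/(2k-1)$ (i.e., $d_{\mathbf{A}}(n)\in O(n^{\log_w(m)})$).
   Context: An algebra $\mathbf{A}$ has an $m$-ary, $p$-pointed, $k$-cube term if there is a term $F(x_1,\dots,x_m)$ in the language of $\mathbf{A}$ and a $k\times m$ matrix $M=[y_{i,j}]$ whose entries are variables and constant symbols (nullary operation symbols of the language), exactly $p$ distinct constant symbols occurring, such that every column of $M$ contains an entry different from the variable $x$, and the identities $F(y_{i,1},\dots,y_{i,m})\approx x$ (the cube identities), $i=1,\dots,k$, hold in $\mathbf{A}$. $d_{\mathbf{A}}(n)$ is the least size of a generating set of $\mathbf{A}^n$. *)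

From mathcomp Require Import ssreflect ssrfun ssrbool eqtype ssrnat fintype.
From Stdlib Require Import Reals List.

Set Implicit Arguments.
Unset Strict Implicit.
Unset Printing Implicit Defensive.

Record signature := Signature { sym : Type; ar : sym -> nat }.

Record algebra (S : signature) := Algebra {
  carrier : Type;
  op : forall f : sym S, ('I_(ar f) -> carrier) -> carrier }.

Arguments op {S} a f _.

Inductive term (S : signature) (X : Type) : Type :=
  | Var : X -> term S X
  | App : forall f : sym S, ('I_(ar f) -> term S X) -> term S X.

Arguments Var {S X} _.
Arguments App {S X} f _.

Fixpoint eval (S : signature) (A : algebra S) (X : Type)
  (v : X -> carrier A) (t : term S X) : carrier A :=
  match t with
  | Var x => v x
  | App f ts => op A f (fun i => @eval S A X v (ts i))
  end.

Arguments eval {S} A {X} v t.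

Definition pow_alg (S : signature) (A : algebra S) (n : nat) : algebra S :=
  {| carrier := 'I_n -> carrier A;
     op := fun f args i => op A f (fun j => args j i) |}.

Definition generated_by (S : signature) (A : algebra S) (s : nat)
  (g : 'I_s -> carrier A) : Prop :=
  forall a : carrier A, exists t : term S 'I_s, eval A g t = a.

Arguments generated_by {S} A {s} g.

Definition finitely_generated (S : signature) (A : algebra S) : Prop :=
  exists (s : nat) (g : 'I_s -> carrier A), generated_by A g.

(* Entries of the cube-identity matrix: variables (indexed by nat; the
   distinguished variable x is variable 0) or constant symbols. *)
Inductive entry (S : signature) : Type :=
  | EVar : nat -> entry S
  | EConst : {c : sym S | ar c = 0} -> entry S.

Arguments EVar {S} _.
Arguments EConst {S} _.

Definition nullary_args (T : Type) (n : nat) (H : n = 0) : 'I_n -> T.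
Proof. move=> [i Hi]; exfalso; move: Hi; rewrite H. by []. Defined.

Definition entry_val (S : signature) (A : algebra S) (v : nat -> carrier A)
  (e : entry S) : carrier A :=
  match e with
  | EVar n => v n
  | EConst c => op A (proj1_sig c) (@nullary_args (carrier A) _ (proj2_sig c))
  end.

Arguments entry_val {S} A v e.

Definition p_pointed (S : signature) (k m : nat) (M : 'I_k -> 'I_m -> entry S)
  (p : nat) : Prop :=
  exists l : list (sym S),
    NoDup l /\ length l = p /\
    forall c : sym S, In c l <-> exists i j (H : ar c = 0), M i j = EConst (exist _ c H).

(* The cube identity
   F(y_{i,1},...,y_{i,m}) ~ x holding in A means: for every assignment v of
   the variables, the value of F at the values of the entries is v 0 (= x). *)
Definition has_cube_term (S : signature) (A : algebra S) (m p k : nat) : Prop :=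
  exists (F : term S 'I_m) (M : 'I_k -> 'I_m -> entry S),
    (forall j : 'I_m, exists i : 'I_k, M i j <> EVar 0) /\
    p_pointed M p /\
    (forall (i : 'I_k) (v : nat -> carrier A),
        eval A (fun j => entry_val A v (M i j)) F = v 0).

From mathcomp Require Import ssreflect ssrfun ssrbool eqtype ssrnat fintype.
From Stdlib Require Import Reals.
From Stdlib Require Import FunctionalExtensionality ClassicalEpsilon Lra.
(* Importing [ssrnat] again after [Reals] makes [^] denote [expn] on [nat]. *)
From mathcomp Require Import ssrnat seq div tuple finset.
From mathcomp Require Import zify.

(* Call a tuple pointed if its last p coordinates hold the constants c_1, ...,
   c_p of the cube identities.  Split the remaining f coordinates into k blocks
   of nearly equal size and use row i of the cube identities on block i: a
   pointed tuple is then F applied coordinatewise to m pointed tuples, the j-th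
   of which only has free coordinates on the blocks whose row has x in column j.
   Every column has an entry other than x, so these are at most f(2k-1)/(2k)
   coordinates.  After D such steps fewer than k free coordinates are left, and
   those pointed tuples are projections of elements of A^(p+k-1).  Hence A^n is
   generated by m^D s elements once n (1 - 1/(2k))^D < k, and the least such D
   gives m^D = O(n^(log_w m)). *)

Set Implicit Arguments.
Unset Strict Implicit.
Unset Printing Implicit Defensive.

Fixpoint tsubst (S : signature) (X Y : Type) (sg : X -> term S Y) (t : term S X) :
    term S Y :=
  match t with
  | Var x => sg x
  | App f ts => App f (fun i => tsubst sg (ts i))
  end.

Definition trename (S : signature) (X Y : Type) (h : X -> Y) (t : term S X) :
    term S Y :=
  tsubst (fun x => Var (h x)) t.

Section Evaluation.
Variables (S : signature) (A : algebra S).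

Lemma eval_tsubst (X Y : Type) (sg : X -> term S Y) (v : Y -> carrier A)
    (t : term S X) :
  eval A v (tsubst sg t) = eval A (fun x => eval A v (sg x)) t.
Proof.
elim: t => [x|f ts IH] //=.
by congr (op A f); apply: functional_extensionality => i; apply: IH.
Qed.

Lemma eval_trename (X Y : Type) (h : X -> Y) (v : Y -> carrier A) (t : term S X) :
  eval A v (trename h t) = eval A (v \o h) t.
Proof. exact: eval_tsubst. Qed.

Definition fpow (I : Type) : algebra S :=
  {| carrier := I -> carrier A; op := fun f args i => op A f (fun j => args j i) |}.

Lemma eval_fpow (I X : Type) (g : X -> carrier (fpow I)) (t : term S X) (i : I) :
  eval (fpow I) g t i = eval A (fun x => g x i) t.
Proof.
elim: t => [x|f ts IH] //=.
by congr (op A f); apply: functional_extensionality => j; apply: IH.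
Qed.

Lemma eval_fpow_comp (I J X : Type) (g : X -> carrier (fpow I)) (sigma : J -> I)
    (t : term S X) :
  eval (fpow J) (fun x => g x \o sigma) t = eval (fpow I) g t \o sigma.
Proof. by apply: functional_extensionality => j /=; rewrite !eval_fpow. Qed.

End Evaluation.

Arguments fpow {S} A I.

Definition covers (S : signature) (B : algebra S) (X Y : Type) (g : X -> carrier B)
    (e : Y -> carrier B) : Prop :=
  forall y, exists t : term S X, eval B g t = e y.

Definition generates (S : signature) (B : algebra S) (X : Type) (g : X -> carrier B) :=
  covers g (fun b => b).

Lemma covers_rename (S : signature) (B : algebra S) (X X' Y : Type) (h : X -> X')
    (g : X -> carrier B) (g' : X' -> carrier B) (e : Y -> carrier B) :
  (forall x, g' (h x) = g x) -> covers g e -> covers g' e.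
Proof.
move=> gh cov y; have [t <-] := cov y; exists (trename h t).
by rewrite eval_trename; congr eval; apply: functional_extensionality.
Qed.

Lemma covers_snd (S : signature) (B : algebra S) (X Y Z : Type) (z : Z)
    (g : X -> carrier B) (e : Y -> carrier B) :
  covers g e -> covers (fun zx : Z * X => g zx.2) e.
Proof. exact: (covers_rename (h := pair z)). Qed.

Lemma covers_ord (S : signature) (B : algebra S) (X : finType) (Y : Type)
    (g : X -> carrier B) (e : Y -> carrier B) (s : nat) :
  #|X| = s -> covers g e -> exists g' : 'I_s -> carrier B, covers g' e.
Proof.
move=> <- cov; exists (g \o enum_val).
by apply: (covers_rename (h := enum_rank)) cov => x /=; rewrite enum_rankK.
Qed.

Section Reindex.
Variables (S : signature) (A : algebra S).

Lemma covers_reindex (I J X Y : Type) (sigma : J -> I) (g : X -> carrier (fpow A I))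
    (e : Y -> carrier (fpow A I)) :
  covers g e -> covers (B := fpow A J) (fun x => g x \o sigma) (fun y => e y \o sigma).
Proof. by move=> cov y; have [t <-] := cov y; exists t; rewrite eval_fpow_comp. Qed.

Lemma generates_reindex (I : eqType) (J : finType) (sigma : J -> I) (a0 : carrier A)
    (X : Type) (g : X -> carrier (fpow A I)) :
  injective sigma -> generates g ->
  generates (B := fpow A J) (fun x => g x \o sigma).
Proof.
move=> inj_sigma gen b.
pose b' (i : I) := if [pick j | sigma j == i] is Some j then b j else a0.
have -> : b = b' \o sigma.
  apply: functional_extensionality => j /=; rewrite /b'.
  by case: pickP => [j' /eqP /inj_sigma -> | /(_ j)]; rewrite ?eqxx.
exact: covers_reindex gen b'.
Qed.

End Reindex.

Lemma exists_inj_ord (J : finType) (n : nat) :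
  #|J| <= n -> exists sigma : J -> 'I_n, injective sigma.
Proof.
move=> le_Jn; exists (fun j => widen_ord le_Jn (enum_rank j)).
move=> x y /(congr1 val) /= eq_xy; apply: enum_rank_inj; exact: val_inj.
Qed.

Lemma balanced_blocks (I : finType) (k : nat) :
  0 < k -> exists blk : I -> 'I_k, forall i, #|I| %/ k <= #|[set t | blk t == i]|.
Proof.
move=> k_gt0; exists (fun t => Ordinal (ltn_pmod (enum_rank t) k_gt0)) => i.
set q := #|I| %/ k.
have lt_I a : a < q -> i + a * k < #|I|.
  move=> lt_aq; have := leq_divM #|I| k; have := ltn_ord i.
  have : a.+1 * k <= q * k by rewrite leq_mul2r lt_aq orbT.
  rewrite -/q mulSn; lia.
pose emb (a : 'I_q) : I := enum_val (Ordinal (lt_I a (ltn_ord a))).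
have emb_inj : injective emb.
  move=> a b /enum_val_inj /(congr1 val) /= /eqP.
  by rewrite eqn_add2l eqn_mul2r eqn0Ngt k_gt0 /= => /eqP; apply: val_inj.
apply: leq_trans (subset_leq_card (_ : [set emb a | a in 'I_q] \subset _)).
  by rewrite card_imset // card_ord.
apply/subsetP => _ /imsetP [a _ ->]; rewrite inE; apply/eqP/val_inj => /=.
by rewrite enum_valK /= addnC modnMDl modn_small.
Qed.

Lemma shrink_ratio (f c k : nat) :
  0 < k -> k <= f -> c + f %/ k <= f -> c * (2 * k) <= f * (2 * k - 1).
Proof.
move=> k_gt0 le_kf le_cf.
have := leq_divM f k; have := ltn_ceil f k_gt0.
have : 0 < f %/ k by rewrite divn_gt0.
move: le_cf; set q := f %/ k; nia.
Qed.

Lemma depth_step (c f k D : nat) :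
  c * (2 * k) <= f * (2 * k - 1) ->
  f * (2 * k - 1) ^ D.+1 < k * (2 * k) ^ D.+1 -> c * (2 * k - 1) ^ D < k * (2 * k) ^ D.
Proof.
move=> le_cf lt_f.
have k2_gt0 : 0 < 2 * k by case: (posnP k) lt_f => [->|]; [rewrite mul0n | lia].
rewrite -(ltn_pmul2r k2_gt0); apply: leq_ltn_trans (_ : f * (2 * k - 1) ^ D.+1 < _).
  by rewrite expnS mulnAC [f * _]mulnA leq_mul2r le_cf orbT.
by rewrite -mulnA -expnSr.
Qed.

Definition is_x (S : signature) (e : entry S) : bool :=
  if e is EVar 0 then true else false.

Lemma is_xP (S : signature) (e : entry S) : reflect (e = EVar 0) (is_x e).
Proof. by case: e => [[|n]|c]; constructor. Qed.

Section CubeTerm.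
Variables (S : signature) (A : algebra S) (m p k : nat).
Variables (F : term S 'I_m) (M : 'I_k -> 'I_m -> entry S).
Variables (cv : 'I_p -> carrier A) (label : entry S -> 'I_p).
Hypothesis cube_id : forall i v, eval A (fun j => entry_val A v (M i j)) F = v 0.
Hypothesis col_not_x : forall j, exists i, ~~ is_x (M i j).
Hypothesis label_const :
  forall i j c v, M i j = EConst c -> entry_val A v (M i j) = cv (label (M i j)).

(* The assignment under which a row's cube identity produces [a] while every
   other variable is read as a constant. *)
Definition pad (a : carrier A) (n : nat) : carrier A :=
  if n is 0 then a else cv (label (EVar n)).

Lemma entry_val_pad i j a :
  entry_val A (pad a) (M i j) = if is_x (M i j) then a else cv (label (M i j)).
Proof.
by case E: (M i j) => [[|n]|c] //; move: (label_const (pad a) E); rewrite E.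
Qed.

Definition point (I : Type) (u : I -> carrier A) (c : I + 'I_p) : carrier A :=
  match c with inl t => u t | inr b => cv b end.

Definition pointed_gen (I X : Type) : Prop :=
  exists g : X -> carrier (fpow A (I + 'I_p)), covers g (@point I).

Section Cells.
Variables (r0 : 'I_k) (I : finType) (blk : I -> 'I_k).

Definition cell (j : 'I_m) := {t : I | is_x (M (blk t) j)}.

(* The coordinate map of the j-th argument of [F]: coordinate [t] reads entry
   [(blk t, j)], which is either [x] (keep [t]) or a constant (read it off the
   pointed part); the pointed part itself is produced by row [r0]. *)
Definition to_cell (j : 'I_m) (c : I + 'I_p) : cell j + 'I_p :=
  match c with
  | inl t => if insub t is Some t' then inl t' else inr (label (M (blk t) j))
  | inr b => inr (if is_x (M r0 j) then b else label (M r0 j))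
  end.

Lemma point_to_cell (u : I -> carrier A) (c : I + 'I_p) :
  eval A (fun j => point (u \o val) (to_cell j c)) F = point u c.
Proof.
case: c => [t|b] /=.
- rewrite -[u t]/(pad (u t) 0) -(cube_id (blk t)).
  congr (eval A _ F); apply: functional_extensionality => j.
  by rewrite entry_val_pad; case: insubP => [t' -> <- | /negbTE ->].
- rewrite -[cv b]/(pad (cv b) 0) -(cube_id r0).
  congr (eval A _ F); apply: functional_extensionality => j.
  by rewrite entry_val_pad; case: ifP.
Qed.

Lemma pointed_gen_cells (X : Type) :
  (forall j, pointed_gen (cell j) X) -> pointed_gen I ('I_m * X).
Proof.
move=> gen_cell.
pose g j := proj1_sig (constructive_indefinite_description _ (gen_cell j)).
have covg j : covers (g j) (@point (cell j)).
  exact: proj2_sig (constructive_indefinite_description _ (gen_cell j)).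
exists (fun jx => g jx.1 jx.2 \o to_cell jx.1) => u.
pose t j := proj1_sig (constructive_indefinite_description _ (covg j (u \o val))).
have tP j : eval _ (g j) (t j) = point (u \o val).
  exact: proj2_sig (constructive_indefinite_description _ (covg j (u \o val))).
exists (tsubst (fun j => trename (pair j) (t j)) F).
apply: functional_extensionality => c.
rewrite eval_tsubst eval_fpow -point_to_cell.
congr (eval A _ F); apply: functional_extensionality => j.
by rewrite eval_trename /= (eval_fpow_comp (g j) (to_cell j)) tP.
Qed.

Lemma card_cell_fiber (j : 'I_m) (q : nat) :
  (forall i, q <= #|[set t | blk t == i]|) -> #|{: cell j}| + q <= #|I|.
Proof.
move=> fiber_ge; have [i0 not_x] := col_not_x j.
have sub : [pred t | is_x (M (blk t) j)] \subset ~: [set t | blk t == i0].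
  by apply/subsetP => t; rewrite !inE; apply: contraTneq => ->.
rewrite card_sig -(cardsC [set t | blk t == i0]) addnC.
exact: leq_add (fiber_ge i0) (subset_leq_card sub).
Qed.

End Cells.

Variables (r0 : 'I_k) (j0 : 'I_m) (s0 : nat).
Variable g0 : 'I_s0 -> carrier (pow_alg A (p + k - 1)).
Hypothesis gen0 : generated_by (pow_alg A (p + k - 1)) g0.

Lemma pointed_gen_small (I : finType) : #|I| < k -> pointed_gen I 'I_s0.
Proof.
move=> small.
have [sigma inj_sigma] : exists sigma : I + 'I_p -> 'I_(p + k - 1), injective sigma.
  by apply: exists_inj_ord; rewrite card_sum card_ord; lia.
have gen0' : generates (B := fpow A 'I_(p + k - 1)) g0 := gen0.
exists (fun l => g0 l \o sigma : carrier (fpow A (I + 'I_p))) => u.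
(* [label] is total, so [cv (label _)] is an element of [A]. *)
exact (generates_reindex (cv (label (EVar 0))) inj_sigma gen0' (point u)).
Qed.

Lemma pointed_gen_depth (D : nat) (I : finType) :
  #|I| * (2 * k - 1) ^ D < k * (2 * k) ^ D -> pointed_gen I (D.-tuple 'I_m * 'I_s0).
Proof.
elim: D I => [|D IH] I small.
  rewrite !expn0 !muln1 in small.
  have [g covg] := pointed_gen_small small.
  by eexists; apply: covers_snd [tuple] _ _ covg.
case: (ltnP #|I| k) => [lt_Ik | le_kI].
  have [g covg] := pointed_gen_small lt_Ik.
  by eexists; apply: covers_snd [tuple j0 | _ < D.+1] _ _ covg.
have k_gt0 : 0 < k := leq_ltn_trans (leq0n _) (ltn_ord r0).
have [blk fiber_ge] := balanced_blocks I k_gt0.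
have cell_small j : #|{: cell blk j}| * (2 * k - 1) ^ D < k * (2 * k) ^ D.
  exact (depth_step (shrink_ratio k_gt0 le_kI (card_cell_fiber j fiber_ge)) small).
have [g covg] := pointed_gen_cells r0 (fun j => IH _ (cell_small j)).
exists (fun tx : D.+1.-tuple 'I_m * 'I_s0 => g (thead tx.1, (behead_tuple tx.1, tx.2))).
pose cons_index (jx : 'I_m * (D.-tuple 'I_m * 'I_s0)) :=
  ([tuple of jx.1 :: jx.2.1], jx.2.2).
apply: (covers_rename (h := cons_index)) covg.
move=> [j [tu l]] /=; rewrite theadE.
by congr (g (_, (_, _))); apply: val_inj.
Qed.

Lemma pow_generated (n D : nat) :
  n * (2 * k - 1) ^ D < k * (2 * k) ^ D ->
  exists g : 'I_(m ^ D * s0) -> carrier (pow_alg A n), generated_by (pow_alg A n) g.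
Proof.
rewrite -{1}(card_ord n) => /pointed_gen_depth [g covg].
have [g' covg'] := covers_ord (card_prod _ _ : #|{: D.-tuple 'I_m * 'I_s0}| = _)
  (covers_reindex inl covg).
rewrite card_tuple !card_ord in g' covg'.
by exists g'.
Qed.

End CubeTerm.

Lemma INR_muln (a b : nat) : INR (a * b) = (INR a * INR b)%R.
Proof. exact: mult_INR. Qed.

Lemma INR_expn (a b : nat) : INR (a ^ b) = (INR a ^ b)%R.
Proof. by elim: b => [|b IH] //; rewrite expnS INR_muln IH. Qed.

Lemma ln_ge0 (x : R) : (1 <= x)%R -> (0 <= ln x)%R.
Proof.
case/Rle_lt_or_eq_dec => [lt_1x | <-]; last by rewrite ln_1; lra.
by apply: Rlt_le; rewrite -ln_1; apply: ln_increasing; lra.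
Qed.

Lemma bernoulli_ineq (a D : nat) : a ^ D * (a + D) <= a.+1 ^ D * a.
Proof.
elim: D => [|D IH]; first by rewrite !expn0 !mul1n addn0.
have : a ^ D * (a + D) * a.+1 <= a.+1 ^ D * a * a.+1 by rewrite leq_mul2r IH orbT.
rewrite !expnS; nia.
Qed.

Lemma exists_depth (n k : nat) :
  0 < k -> exists D, n * (2 * k - 1) ^ D < k * (2 * k) ^ D.
Proof.
move=> k_gt0; set a := 2 * k - 1.
have a_gt0 : 0 < a by rewrite /a; lia.
have -> : 2 * k = a.+1 by rewrite /a; lia.
exists (n * a); have := bernoulli_ineq a (n * a).
have : 0 < a ^ (n * a) by rewrite expn_gt0 a_gt0.
nia.
Qed.

Lemma Rpower_depth_bound (m k n D : nat) :
  0 < m -> 0 < k -> (2 * k) ^ D <= n * (2 * k - 1) ^ D ->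
  (INR (m ^ D) <= Rpower (INR n) (ln (INR m) / ln ((2 * INR k) / (2 * INR k - 1))))%R.
Proof.
move=> m_gt0 k_gt0 le_n.
have k1 : (1 <= INR k)%R by apply: (le_INR 1); apply/leP.
have m1 : (1 <= INR m)%R by apply: (le_INR 1); apply/leP.
set w := (2 * INR k / (2 * INR k - 1))%R.
have w_gt1 : (1 < w)%R.
  by apply: (Rmult_lt_reg_r (2 * INR k - 1)); rewrite /w; field_simplify; lra.
have ln_w : (0 < ln w)%R by rewrite -ln_1; apply: ln_increasing; lra.
have wD_le_n : (w ^ D <= INR n)%R.
  have := le_INR _ _ (elimT leP le_n).
  rewrite INR_muln !INR_expn minus_INR; last by apply/leP; lia.
  rewrite !INR_muln (_ : INR 2 = 2%R) // (_ : INR 1 = 1%R) // => le_R.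
  have e_gt0 : (0 < (2 * INR k - 1) ^ D)%R by apply: pow_lt; lra.
  rewrite /w /Rdiv Rpow_mult_distr pow_inv.
  apply: (Rmult_le_reg_r ((2 * INR k - 1) ^ D)) => //.
  rewrite Rmult_assoc Rinv_l; lra.
have e_ge0 : (0 <= ln (INR m) / ln w)%R.
  apply: Rmult_le_pos; last by apply/Rlt_le/Rinv_0_lt_compat.
  exact: ln_ge0.
have wD_gt0 : (0 < w ^ D)%R by apply: pow_lt; lra.
rewrite INR_expn -Rpower_pow; last lra.
apply: Rle_trans (Rle_Rpower_l _ _ _ e_ge0 (conj wD_gt0 wD_le_n)).
rewrite -Rpower_pow; last lra.
(* [m = w ^ log_w m] *)
rewrite Rpower_mult /Rpower; apply: Req_le; congr exp; field; lra.
Qed.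

Lemma min_depth_bound (m k s n : nat) :
  0 < m -> 0 < k -> 0 < n ->
  exists D, n * (2 * k - 1) ^ D < k * (2 * k) ^ D /\
    (INR (m ^ D * s) <= INR (m * s) *
       Rpower (INR n) (ln (INR m) / ln ((2 * INR k) / (2 * INR k - 1))))%R.
Proof.
move=> m_gt0 k_gt0 n_gt0.
case: (ex_minnP (exists_depth n k_gt0)) => D small D_min.
exists D; split=> //.
have le_n : (2 * k) ^ D.-1 <= n * (2 * k - 1) ^ D.-1.
  case: D small D_min => [|D] _ D_min; first by rewrite !expn0 muln1.
  have : ~~ (n * (2 * k - 1) ^ D < k * (2 * k) ^ D).
    by apply/negP => /D_min; rewrite ltnn.
  by rewrite -leqNgt; apply: leq_trans; rewrite leq_pmull.
have le_s : m ^ D * s <= m ^ D.-1 * (m * s).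
  by case: D {small D_min le_n} => [|D]; rewrite ?expn0 ?mul1n ?leq_pmull // expnSr mulnA.
apply: Rle_trans (_ : INR (m ^ D.-1 * (m * s)) <= _)%R; first exact/le_INR/leP.
rewrite INR_muln Rmult_comm; apply: Rmult_le_compat_l; first exact: pos_INR.
exact: Rpower_depth_bound.
Qed.

Lemma p_pointed_const (S : signature) (k m p : nat) (M : 'I_k -> 'I_m -> entry S) :
  p_pointed M p -> 0 < p -> exists i j c, M i j = EConst c.
Proof.
case=> [[|c0 l] [_ [<- occ]]] // _.
by have [i [j [ar_c0 E]]] := (occ c0).1 (or_introl erefl); exists i, j, (exist _ c0 ar_c0).
Qed.

(* Symbols have no decidable equality, so [label] finds the position of a
   constant in the list witnessing [p_pointed] by [epsilon]. *)
Lemma p_pointed_labelling (S : signature) (A : algebra S) (k m p : nat)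
    (M : 'I_k -> 'I_m -> entry S) :
  p_pointed M p -> 0 < p ->
  exists (cv : 'I_p -> carrier A) (label : entry S -> 'I_p),
    forall i j c v, M i j = EConst c -> entry_val A v (M i j) = cv (label (M i j)).
Proof.
case=> [[|c0 l] [_ [<- occ]]] // p_gt0.
have [_ [_ [ar_c0 _]]] := (occ c0).1 (or_introl erefl).
pose a0 := op A c0 (@nullary_args (carrier A) _ ar_c0).
pose pos0 : 'I_(length (c0 :: l)) := Ordinal p_gt0.
pose cv (i : 'I_(length (c0 :: l))) := op A (List.nth i (c0 :: l) c0) (fun _ => a0).
pose label (e : entry S) :=
  if e is EConst c then epsilon (inhabits pos0) (fun i => List.nth i (c0 :: l) c0 = sval c)
  else pos0.
exists cv, label => i j [c ar_c] v Mij; rewrite Mij /=.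
have in_c : List.In c (c0 :: l) by apply/occ; exists i, j, ar_c.
have [n [lt_n nth_n]] := List.In_nth (c0 :: l) c c0 in_c.
have lt_n' : n < length (c0 :: l) by apply/ltP.
have nth_label : List.nth (label (EConst (exist _ c ar_c))) (c0 :: l) c0 = c.
  by apply: (epsilon_spec (inhabits pos0) (fun i => List.nth i (c0 :: l) c0 = c));
    exists (Ordinal lt_n').
rewrite /cv nth_label.
congr (op A c); apply: functional_extensionality => -[x lt_x].
by exfalso; move: lt_x; rewrite ar_c.
Qed.

Theorem theorem5p5 (S : signature) (A : algebra S) (m p k : nat) :
  has_cube_term A m p k ->
  (1 <= p)%nat ->
  finitely_generated (pow_alg A (p + k - 1)) ->
  (forall n : nat, finitely_generated (pow_alg A n)) /\
  exists (C : R) (N : nat), forall n : nat, (N <= n)%nat ->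
    exists (s : nat) (g : 'I_s -> carrier (pow_alg A n)),
      generated_by (pow_alg A n) g /\
      (INR s <= C * Rpower (INR n)
         (ln (INR m) / ln ((2 * INR k) / (2 * INR k - 1))))%R.
Proof.
move=> [F [M [col [pointed cube]]]] p_gt0 [s0 [g0 gen0]].
have [i0 [j0 _]] := p_pointed_const pointed p_gt0.
have [cv [label label_const]] := p_pointed_labelling A pointed p_gt0.
have col_not_x j : exists i, ~~ is_x (M i j).
  by have [i not_x] := col j; exists i; apply/is_xP.
have k_gt0 : 0 < k := leq_ltn_trans (leq0n _) (ltn_ord i0).
have m_gt0 : 0 < m := leq_ltn_trans (leq0n _) (ltn_ord j0).
have gen := pow_generated (label := label) cube col_not_x label_const i0 j0 gen0.
split=> [n | ].
  have [D /gen [g genD]] := exists_depth n k_gt0.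
  by exists (m ^ D * s0), g.
exists (INR (m * s0)), 1 => n n_gt0.
have [D [small bound]] := min_depth_bound s0 m_gt0 k_gt0 n_gt0.
have [g genD] := gen n D small.
by exists (m ^ D * s0), g.
Qed.
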